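(* Let $\mathcal A=\{A_s\}_{s\in\mathbf S}\subset CQ(\mathbf X,\mathcal H)$ be an AVcqC with $\mathbf S$ finite, $l\in\mathbb N$, $\mu_l$ an $(l,M_l)$-random code for $\mathcal A$ and $0\le\varepsilon_l<1$ with $$\inf_{s^l\in\mathbf S^l}\int\frac1{M_l}\sum_{i=1}^{M_l}\mathrm{tr}(A_{s^l}(x_i^l)D_i^l)\,d\mu_l\big((x_i^l,D_i^l)_{i=1}^{M_l}\big)\ge1-\varepsilon_l.$$ Let $n,m\in\mathbb R$ be such that $l^n\in\mathbb N$. If $4\varepsilon_l\le l^{-m}$ and $2\log|\mathbf S|<l^{n-m-1}$, then there exist $l^n$ deterministic $(l,M_l)$-codes $(x_{i,j}^l,D_{i,j}^l)_{i=1}^{M_l}$, $1\le j\le l^n$, such that $$\frac1{l^n}\sum_{j=1}^{l^n}\frac1{M_l}\sum_{i=1}^{M_l}\mathrm{tr}(A_{s^l}(x_{i,j}^l)D_{i,j}^l)\ge1-l^{-m}\quad\text{for all }s^l\in\mathbf S^l.$$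
   Context: $\mathbf X$ finite, $\mathcal H$ finite-dimensional complex Hilbert space, $CQ(\mathbf X,\mathcal H)$ the maps $\mathbf X\to\mathcal S(\mathcal H)$; $A_{s^l}(x^l)=\bigotimes_iA_{s_i}(x_i)$. An $(l,M)$ deterministic code is $(x_i^l,D_i^l)_{i=1}^M$ with $x_i^l\in\mathbf X^l$, $D_i^l\ge0$ on $\mathcal H^{\otimes l}$, $\sum_iD_i^l\le\mathbf 1$; an $(l,M)$-random code is a probability measure on the set of such tuples (with a sigma-algebra making the success functions measurable). Logs base 2. *)

From HB Require Import structures.
From mathcomp Require Import all_boot all_order all_algebra.
From mathcomp Require Import complex mxtens.
From mathcomp Require Import all_classical all_reals all_analysis.

Set Implicit Arguments.
Unset Strict Implicit.
Unset Printing Implicit Defensive.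

Import Order.TTheory GRing.Theory Num.Theory.
Local Open Scope ring_scope.

(* The Hilbert space H is C^d, C = R[i]; H^{(x)l} is C^(dpow d l), dpow d l = d^l. *)
Fixpoint dpow (d l : nat) : nat :=
  match l with 0 => 1%N | l'.+1 => (d * dpow d l')%N end.

Section QDefs.
Variable R : realType.
Local Notation C := (R[i]).

(* positive semidefinite: <v, A v> >= 0 for every vector v (order of C:
   0 <= z iff z is real and nonnegative) *)
Definition psd (n : nat) (A : 'M[C]_n) : Prop :=
  forall v : 'cV[C]_n, 0 <= ((\row_j (v j 0)^* ) *m A *m v) 0 0.

Definition density (n : nat) (A : 'M[C]_n) : Prop := psd A /\ \tr A = 1.

Fixpoint ktens (d l : nat) : ('I_l -> 'M[C]_d) -> 'M[C]_(dpow d l) :=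
  match l return ('I_l -> 'M[C]_d) -> 'M[C]_(dpow d l) with
  | 0 => fun _ => 1%:M
  | l'.+1 => fun f => tensmx (f ord0) (ktens (fun i : 'I_l' => f (lift ord0 i)))
  end.

Definition cq_channel (X : finType) (d : nat) (W : X -> 'M[C]_d) : Prop :=
  forall x, density (W x).

Definition Atens (S X : finType) (d l : nat) (A : S -> X -> 'M[C]_d)
  (s : {ffun 'I_l -> S}) (x : {ffun 'I_l -> X}) : 'M[C]_(dpow d l) :=
  ktens (fun i => A (s i) (x i)).

Record dcode (X : finType) (d l M : nat) := Code {
  cword : 'I_M -> {ffun 'I_l -> X};
  cdec  : 'I_M -> 'M[C]_(dpow d l) }.

Definition is_code (X : finType) (d l M : nat) (c : dcode X d l M) : Prop :=
  (forall i, psd (cdec c i)) /\ psd (1%:M - \sum_i cdec c i).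

Definition success (S X : finType) (d l M : nat) (A : S -> X -> 'M[C]_d)
  (s : {ffun 'I_l -> S}) (c : dcode X d l M) : R :=
  (M%:R)^-1 * \sum_(i < M) @complex.Re R (\tr (Atens A s (cword c i) *m cdec c i)).

Definition log2 (x : R) : R := ln x / ln 2.

End QDefs.

(* Derandomization by pessimistic estimators.  Write u_s(t) in [0,1] for the
   success of the sampled code c(t) on state sequence s.  By convexity of
   2^x, a state s on which codes c(t_1), ..., c(t_K) average below 1 - a has
   prod_k (2 - u_s(t_k)) >= 2^(K a).  Since 2 - u_s has mean at most 1 + eps,
   the samples t_k can be chosen one at a time so that sum_s prod_k (2 - u_s(t_k))
   grows by at most a factor 1 + eps + del per step, ending below
   |S|^l (1 + eps + del)^K < 2^(K a) under the hypotheses.  That the u_s lie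
   in [0,1] comes from writing the tensor products of density matrices as
   nonnegative combinations of rank-one matrices, whose traces against the
   decoding operators are then nonnegative. *)

From HB Require Import structures.
From mathcomp Require Import all_boot all_order all_algebra.
From mathcomp Require Import complex mxtens.
From mathcomp Require Import all_classical all_reals all_analysis.
From mathcomp Require Import measurable_realfun ring lra.
Import Order.TTheory GRing.Theory Num.Theory.
Local Open Scope ring_scope.
Set Implicit Arguments.
Unset Strict Implicit.
Unset Printing Implicit Defensive.

Lemma conj_eq_of_polar (C : numClosedFieldType) (a b : C) :
  a + b \is Num.real -> 'i * a - 'i * b \is Num.real -> b = a^*.
Proof.
move=> /conj_Creal e1 /conj_Creal e2.
have ni0 : 2 * 'i != 0 :> C by rewrite mulf_neq0 ?pnatr_eq0 ?neq0Ci.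
apply: (mulfI ni0); rewrite rmorphD /= in e1; rewrite !rmorphB !rmorphM /= conjCi in e2.
transitivity ('i * (a + b) - ('i * a - 'i * b)); first ring.
by rewrite -e1 -e2; ring.
Qed.

Section HermitianForms.
Variable R : realType.
Local Notation C := (R[i]).

Definition adjv n (v : 'cV[C]_n) : 'rV[C]_n := \row_j (v j 0)^*.
Definition form n (B : 'M[C]_n) (x y : 'cV[C]_n) : C := (adjv x *m B *m y) 0 0.

Lemma adjvD n (x y : 'cV[C]_n) : adjv (x + y) = adjv x + adjv y.
Proof. by apply/matrixP=> i j; rewrite !mxE rmorphD. Qed.

Lemma adjvZ n (c : C) (x : 'cV[C]_n) : adjv (c *: x) = c^* *: adjv x.
Proof. by apply/matrixP=> i j; rewrite !mxE rmorphM. Qed.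

Lemma adjv_delta n (k : 'I_n) : adjv (delta_mx k 0) = delta_mx 0 k.
Proof.
apply/matrixP => i j; rewrite !mxE (ord1 i) eqxx /= andbT.
by case: (j == k); rewrite ?rmorph1 ?rmorph0.
Qed.

Lemma formDl n (B : 'M[C]_n) x y z : form B (x + y) z = form B x z + form B y z.
Proof. by rewrite /form adjvD !mulmxDl mxE. Qed.

Lemma formDr n (B : 'M[C]_n) x y z : form B z (x + y) = form B z x + form B z y.
Proof. by rewrite /form !mulmxDr mxE. Qed.

Lemma formZl n (B : 'M[C]_n) c x y : form B (c *: x) y = c^* * form B x y.
Proof. by rewrite /form adjvZ -!scalemxAl mxE. Qed.

Lemma formZr n (B : 'M[C]_n) c x y : form B x (c *: y) = c * form B x y.
Proof. by rewrite /form -!scalemxAr mxE. Qed.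

Lemma form_delta n (B : 'M[C]_n) i j :
  form B (delta_mx i 0) (delta_mx j 0) = B i j.
Proof. by rewrite /form adjv_delta -rowE -colE !mxE. Qed.

Lemma form_conj n (B : 'M[C]_n) x y : psd B -> form B y x = (form B x y)^*.
Proof.
move=> hB; set a := form B x y; set b := form B y x.
have real_form v : form B v v \is Num.real by apply: ger0_real; apply: hB.
apply: conj_eq_of_polar.
  have -> : a + b = form B (x + y) (x + y) - form B x x - form B y y.
    by rewrite formDl !formDr -/a -/b; ring.
  by rewrite !rpredB.
have -> : 'i * a - 'i * b =
    form B (x + 'i *: y) (x + 'i *: y) - form B x x - form B y y.
  rewrite formDl !formDr !formZl !formZr -/a -/b conjCi.
  have := @sqrCi C; rewrite expr2 => ii; rewrite !mulNr (mulrA 'i 'i) ii; ring.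
by rewrite !rpredB.
Qed.

Lemma psd_herm n (B : 'M[C]_n) i j : psd B -> B j i = (B i j)^*.
Proof. by move=> h; rewrite -!form_delta form_conj. Qed.

Lemma psd_diag_ge0 n (B : 'M[C]_n) i : psd B -> 0 <= B i i.
Proof. by move=> h; rewrite -form_delta; apply: h. Qed.

Lemma psd_diag0 n (B : 'M[C]_n) j k : psd B -> B j j = 0 -> B k j = 0.
Proof.
move=> hB hjj; set x : 'cV[C]_n := delta_mx k 0; set e : 'cV[C]_n := delta_mx j 0.
rewrite -form_delta -/x -/e; apply/eqP; apply: contraT => c0.
set c := form B x e in c0 *; set p := form B x x.
have p0 : 0 <= p by apply: hB.
set z := - (p + 1) / c.
have zc : z * c = - (p + 1) by rewrite /z mulrVK ?unitfE.
have zc' : z^* * c^* = - (p + 1).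
  by rewrite -rmorphM zc; apply: conj_Creal; rewrite rpredN rpredD // ger0_real.
have : 0 <= form B (x + z *: e) (x + z *: e) := hB _.
rewrite formDl !formDr !formZl !formZr -/p -/c (form_conj _ _ hB) -/c.
rewrite /e form_delta hjj !mulr0 addr0 zc' zc.
have -> : p + - (p + 1) + - (p + 1) = - (p + 2%:R) by rewrite -[2%:R]/(1 + 1); ring.
rewrite oppr_ge0 => h; have : 0 < p + 2%:R by rewrite ltr_wpDl.
by move/lt_le_trans/(_ h); rewrite ltxx.
Qed.

Lemma form_rank1 n (w x y : 'cV[C]_n) :
  form (w *m adjv w) x y = (adjv x *m w) 0 0 * (adjv w *m y) 0 0.
Proof. by rewrite /form !mulmxA -(mulmxA (adjv x *m w)) mxE big_ord1. Qed.

Lemma formBZ n (B1 B2 : 'M[C]_n) c x y :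
  form (B1 - c *: B2) x y = form B1 x y - c * form B2 x y.
Proof. by rewrite /form mulmxBr mulmxBl -scalemxAr -scalemxAl !mxE. Qed.

Lemma adjv_col n (B : 'M[C]_n) k : psd B -> adjv (col k B) = row k B.
Proof. by move=> hB; apply/matrixP => i j; rewrite !mxE -psd_herm. Qed.

(* A Cholesky elimination step; positivity is completing the square along
   [delta_mx k 0]. *)
Lemma psd_sub_rank1_col n (B : 'M[C]_n) k : psd B -> B k k != 0 ->
  psd (B - (B k k)^-1 *: (col k B *m adjv (col k B))).
Proof.
move=> hB hk v; set d := B k k; set e : 'cV[C]_n := delta_mx k 0.
rewrite -/(form _ v v) formBZ form_rank1.
have -> : adjv v *m col k B = adjv v *m B *m e by rewrite colE mulmxA.
rewrite (adjv_col _ hB) rowE -adjv_delta -/e -/(form B v e) -/(form B e v).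
set t := - form B e v / d.
have : 0 <= form B (v + t *: e) (v + t *: e) := hB _.
rewrite formDl !formDr !formZl !formZr form_delta -/d -mulrDr.
have -> : form B e v + t * d = 0 by rewrite /t mulrVK ?unitfE // addrN.
rewrite mulr0 addr0 /t.
move: (form B e v) (form B v e) (form B v v) => g a p.
suff -> : p - d^-1 * (a * g) = p + (- g / d) * a by [].
by ring.
Qed.

Definition sum_rank1 n (B : 'M[C]_n) := exists s : seq (C * 'cV[C]_n),
  all (fun cw => 0 <= cw.1) s /\ B = \sum_(cw <- s) cw.1 *: (cw.2 *m adjv cw.2).

Lemma psd_sum_rank1 n (B : 'M[C]_n) : psd B -> sum_rank1 B.
Proof.
move=> hB; have [N] := ubnP #|[set j | B j j != 0]|.
elim: N B hB => // N IH B hB; rewrite ltnS => leN.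
have [/setP supp0 | [k]] := set_0Vmem [set j | B j j != 0].
  have -> : B = 0.
    apply/matrixP => i j; rewrite mxE; apply: psd_diag0 => //.
    by apply/eqP; move: (supp0 j); rewrite !inE => /negbFE.
  by exists [::]; rewrite big_nil.
rewrite inE => hk; set d := B k k in hk.
set B' := B - d^-1 *: (col k B *m adjv (col k B)).
have B'E i : B' i i = B i i - d^-1 * (B i k * (B i k)^*).
  by rewrite !mxE big_ord1 !mxE.
have supp' : [set j | B' j j != 0] \proper [set j | B j j != 0].
  apply/properP; split; last by exists k; rewrite !inE ?hk // B'E -/d
    -psd_herm // mulrA mulVf // mul1r subrr eqxx.
  apply/fintype.subsetP => j; rewrite !inE; apply: contraNN => /eqP Bjj.
  by rewrite B'E Bjj (psd_herm k j hB) (psd_diag0 k hB Bjj) rmorph0 mul0r mulr0 subrr.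
have [s [s0 eB']] : sum_rank1 B'.
  apply: IH; first exact: psd_sub_rank1_col.
  exact: leq_trans (proper_card supp') leN.
exists ((d^-1, col k B) :: s); split; first by rewrite /= invr_ge0 psd_diag_ge0.
by rewrite big_cons /= -eB' /B' addrC subrK.
Qed.

Lemma sum_rank1_tr_mul_ge0 n (A D : 'M[C]_n) :
  sum_rank1 A -> psd D -> 0 <= \tr (A *m D).
Proof.
move=> [s [s0 ->]] hD; rewrite mulmx_suml raddf_sum /= big_seq.
apply: sumr_ge0 => cw cws; rewrite -scalemxAl mxtraceZ.
apply: mulr_ge0; first by move/allP: s0 => /(_ cw cws).
by rewrite -mulmxA mxtrace_mulC trace_mx11; apply: hD.
Qed.

Lemma tensmx_sum (I J : Type) (r1 : seq I) (r2 : seq J) m p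
  (F : I -> 'M[C]_m) (G : J -> 'M[C]_p) :
  tensmx (\sum_(a <- r1) F a) (\sum_(b <- r2) G b) =
  \sum_(a <- r1) \sum_(b <- r2) tensmx (F a) (G b).
Proof.
apply/matrixP => i j; rewrite !mxE !summxE mulr_suml; apply: eq_bigr => a _.
by rewrite summxE mulr_sumr; apply: eq_bigr => b _; rewrite !mxE.
Qed.

Lemma tensmxZ m p (c c' : C) (M : 'M[C]_m) (N : 'M[C]_p) :
  tensmx (c *: M) (c' *: N) = (c * c') *: tensmx M N.
Proof. by apply/matrixP => i j; rewrite !mxE mulrACA. Qed.

Lemma tensmx_adjv m p (w : 'cV[C]_m) (u : 'cV[C]_p) :
  tensmx (adjv w) (adjv u) = adjv (tensmx w u).
Proof.
apply/matrixP => i j; rewrite !mxE rmorphM.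
by case: (mxtens_unindex (0 : 'I_(1 * 1))) => a b; rewrite /= (ord1 a) (ord1 b).
Qed.

Lemma sum_rank1_tens m p (A : 'M[C]_m) (B : 'M[C]_p) :
  sum_rank1 A -> sum_rank1 B -> sum_rank1 (tensmx A B).
Proof.
move=> [s1 [h1 ->]] [s2 [h2 ->]].
exists [seq (a.1 * b.1, tensmx a.2 b.2) | a <- s1, b <- s2]; split.
  apply/allP => cw /allpairsP [[a b] [ha hb ->]] /=.
  by apply: mulr_ge0; [move/allP: h1 => /(_ a ha) | move/allP: h2 => /(_ b hb)].
rewrite tensmx_sum big_allpairs_dep; apply: eq_bigr => a _; apply: eq_bigr => b _.
by rewrite tensmxZ -tensmx_mul tensmx_adjv.
Qed.

Lemma mxtrace_tens m p (A : 'M[C]_m) (B : 'M[C]_p) :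
  \tr (tensmx A B) = \tr A * \tr B.
Proof. by rewrite /mxtrace mulr_sum; apply: eq_bigr => i _; rewrite mxE. Qed.

Lemma sum_rank1_ktens d l (f : 'I_l -> 'M[C]_d) :
  (forall i, sum_rank1 (f i)) -> sum_rank1 (ktens f).
Proof.
elim: l f => [|l IH] f hf /=.
  exists [:: (1, const_mx 1)]; split; first by rewrite /= ler01.
  rewrite big_seq1 /= scale1r; apply/matrixP => i j.
  by rewrite !mxE big_ord1 !mxE (ord1 i) (ord1 j) eqxx conjC1 mulr1.
by apply: sum_rank1_tens; [apply: hf | apply: IH => i; apply: hf].
Qed.

Lemma mxtrace_ktens d l (f : 'I_l -> 'M[C]_d) :
  (forall i, \tr (f i) = 1) -> \tr (ktens f) = 1.
Proof.
elim: l f => [|l IH] f hf /=; first by rewrite mxtrace1.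
by rewrite mxtrace_tens hf IH ?mul1r // => i; apply: hf.
Qed.

Lemma density_Atens (S X : finType) d l (A : S -> X -> 'M[C]_d)
  (hA : forall s, cq_channel (A s)) (s : {ffun 'I_l -> S}) (x : {ffun 'I_l -> X}) :
  sum_rank1 (Atens A s x) /\ \tr (Atens A s x) = 1.
Proof.
split; last by apply: mxtrace_ktens => i; case: (hA (s i) (x i)).
by apply: sum_rank1_ktens => i; apply: psd_sum_rank1; case: (hA (s i) (x i)).
Qed.

Lemma tr_mul_povm_bounds n (A : 'M[C]_n) M (D : 'I_M -> 'M[C]_n) i :
  sum_rank1 A -> \tr A = 1 -> (forall j, psd (D j)) -> psd (1%:M - \sum_j D j) ->
  0 <= \tr (A *m D i) <= 1.
Proof.
move=> hA trA hD hS; have ge0 j := sum_rank1_tr_mul_ge0 hA (hD j).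
rewrite ge0 /=; have := sum_rank1_tr_mul_ge0 hA hS.
rewrite mulmxBr mulmx1 mulmx_sumr mxtraceD -scaleN1r mxtraceZ mulN1r.
rewrite (raddf_sum (@mxtrace _ n)) trA subr_ge0.
by apply: le_trans; rewrite (bigD1 i) //= lerDl sumr_ge0.
Qed.

Lemma success_bounds (S X : finType) d l M (A : S -> X -> 'M[C]_d)
  (hA : forall s, cq_channel (A s)) (s : {ffun 'I_l -> S}) (c : dcode R X d l M) :
  is_code c -> 0 <= success A s c <= 1.
Proof.
move=> [hD hS].
have hz i : 0 <= complex.Re (\tr (Atens A s (cword c i) *m cdec c i)) <= 1.
  have [hA1 trA] := density_Atens hA s (cword c i).
  move: (tr_mul_povm_bounds i hA1 trA hD hS).
  by rewrite !lecE => /andP[/andP[_ ->] /andP[_ ->]].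
rewrite /success; case: M c hD hS hz => [|M] c hD hS hz.
  by rewrite big_ord0 mulr0 lexx ler01.
rewrite mulr_ge0 ?invr_ge0 ?ler0n ?sumr_ge0 //=; last by move=> i _; case/andP: (hz i).
rewrite ler_pdivrMl ?ltr0n // mulr1.
have -> : M.+1%:R = \sum_(i < M.+1) (1 : R) by rewrite sumr_const card_ord.
by apply: ler_sum => i _; case/andP: (hz i).
Qed.

End HermitianForms.

Section RealBounds.
Variable R : realType.

Lemma expR_ln2_le1D (f : R) : 0 <= f -> f <= 1 -> expR (f * ln 2) <= 1 + f.
Proof.
move=> f0 f1; have := @convex_expR R (Itv01 f0 f1) (ln 2) 0.
rewrite !convRE /= expR0 lnK ?posrE // mulr0 addr0 => /le_trans; apply.
by rewrite /unstable.onem mulr1; lra.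
Qed.

Lemma ln2_ge_half : 1 / 2 <= ln (2 : R).
Proof.
have : 1 / 2 <= expR (- (1 / 2) : R) by have := expR_ge1Dx (- (1 / 2) : R); lra.
rewrite expRN mul1r lef_pV2 ?posrE ?expR_gt0 // => h.
by rewrite -ler_expR lnK ?posrE // mul1r.
Qed.

Lemma expR_ln2_sum_le_prod (J : finType) (x : J -> R) :
  (forall j, 0 <= x j <= 1) -> expR ((\sum_j x j) * ln 2) <= \prod_j (1 + x j).
Proof.
move=> h; rewrite mulr_suml expR_sum; apply: ler_prod => j _.
by case/andP: (h j) => x0 x1; rewrite expR_ge0 expR_ln2_le1D.
Qed.

Lemma exists_slack (l K nS : nat) (a eps : R) : (0 < l)%N -> (0 < K)%N ->
  0 <= eps -> 4 * eps <= a -> 2 * l%:R * log2 (nS%:R : R) < K%:R * a ->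
  exists2 del : R, 0 < del &
    (nS ^ l)%:R * (1 + eps + del) ^+ K < expR (K%:R * a * ln 2).
Proof.
move=> l0 K0 eps0 epsa; case: nS => [|nS] hS.
  by exists 1 => //; rewrite exp0n // mul0r expR_gt0.
have q0 : 1 / 2 <= ln (2 : R) := ln2_ge_half.
set q := ln (2 : R) in q0 *; set x := ln (nS.+1%:R : R).
have Kpos : 0 < (K%:R : R) by rewrite ltr0n.
have qpos : 0 < q by lra.
(* Since [q >= 1/2], both [K eps] and [l ln |S|] are below [K a q / 2]. *)
have Keps : K%:R * eps <= K%:R * a * q / 2.
  suff : K%:R * (4 * eps) <= K%:R * (2 * a * q) by lra.
  have a0 : 0 <= a by lra.
  by rewrite ler_wpM2l ?ler0n //; apply: le_trans epsa _; nra.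
have lx : l%:R * x < K%:R * a * q / 2.
  move: hS; rewrite /log2 -/q -/x -(ltr_pM2r qpos) => hS.
  suff : 2 * l%:R * (x / q) * q = 2 * (l%:R * x) by lra.
  by field; rewrite gt_eqF.
set g := K%:R * a * q / 2 - l%:R * x.
have gpos : 0 < g by rewrite subr_gt0.
have del0 : 0 < g / (2 * K%:R) by rewrite divr_gt0 ?mulr_gt0.
exists (g / (2 * K%:R)) => //.
have -> : (nS.+1 ^ l)%:R = expR (l%:R * x) :> R.
  by rewrite expRM_natl /x lnK ?posrE ?ltr0n // natrX.
apply: (@le_lt_trans _ _ (expR (l%:R * x) * expR (K%:R * (eps + g / (2 * K%:R))))).
  rewrite ler_wpM2l ?expR_ge0 // expRM_natl lerXn2r ?nnegrE ?expR_ge0 //.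
    by rewrite addr_ge0 // ?addr_ge0 // ltW.
  by rewrite -addrA expR_ge1Dx.
rewrite -expRD ltr_expR.
have -> : K%:R * (eps + g / (2 * K%:R)) = K%:R * eps + g / 2.
  by field; rewrite gt_eqF.
by rewrite /g; lra.
Qed.

End RealBounds.

Section Derandomization.
Variables (R : realType) (dT : measure_display) (T : measurableType dT).
Variable P : probability T R.
Local Open Scope classical_set_scope.

Lemma probability_inhabited : inhabited T.
Proof.
rewrite inhabitedE; apply: contrapT => hT.
have : P setT = 1%E := probability_setT P.
suff -> : [set: T] = set0 by rewrite measure0 => -[] /eqP; rewrite eq_sym oner_eq0.
by apply/seteqP; split => // t _; apply: hT; exists t.
Qed.

Lemma exists_ge_of_integral_ge (g : T -> R) (b del : R) :
  measurable_fun setT g -> (forall t, 0 <= g t) ->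
  (b%:E <= \int[P]_t (g t)%:E)%E -> 0 < del -> exists t, b - del <= g t.
Proof.
move=> mg g0 hb del0; apply: contrapT => /forallNP hlt.
have : (\int[P]_t (g t)%:E <= \int[P]_t (b - del)%:E)%E.
  apply: ge0_le_integral => //; first by move=> t _; rewrite lee_fin.
    exact/measurable_EFinP.
  by move=> t _; rewrite lee_fin; apply: ltW; rewrite ltNge; apply/negP/hlt.
have P1 : (P : {measure set T -> \bar R}) [set: T] = 1%E := probability_setT P.
rewrite integral_cst // P1 mule1 => /(le_trans hb).
by rewrite lee_fin; lra.
Qed.

Lemma integral_wsum_ge (I : finType) (u : I -> T -> R) (w : I -> R) (b : R) :
  (forall i, measurable_fun setT (u i)) -> (forall i t, 0 <= u i t) ->
  (forall i, 0 <= w i) -> (forall i, (b%:E <= \int[P]_t (u i t)%:E)%E) ->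
  ((b * \sum_i w i)%:E <= \int[P]_t (\sum_i w i * u i t)%:E)%E.
Proof.
move=> hm u0 w0 hb.
have -> : (fun t => (\sum_i w i * u i t)%:E) = (fun t => \sum_i (w i * u i t)%:E).
  by apply/funext => t; rewrite sumEFin.
rewrite ge0_integral_sum //.
- rewrite mulr_sumr -sumEFin; apply: lee_sum => i _.
  have -> : (fun t => (w i * u i t)%:E) = (fun t => (w i)%:E * (u i t)%:E)%E.
    by apply/funext => t; rewrite EFinM.
  rewrite ge0_integralZl_EFin //.
  + by rewrite mulrC EFinM lee_wpmul2l ?lee_fin.
  + by move=> t _; rewrite lee_fin.
  + exact/measurable_EFinP.
- by move=> i; apply/measurable_EFinP; apply: measurable_funM.
- by move=> i t _; rewrite lee_fin mulr_ge0.
Qed.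

Variables (I : finType) (u : I -> T -> R) (eps : R).
Hypothesis eps_ge0 : 0 <= eps.
Hypothesis u_meas : forall i, measurable_fun setT (u i).
Hypothesis u01 : forall i t, 0 <= u i t <= 1.
Hypothesis u_int : forall i, ((1 - eps)%:E <= \int[P]_t (u i t)%:E)%E.

Lemma exists_weighted_step (w : I -> R) (del : R) :
  (forall i, 0 <= w i) -> 0 < del ->
  exists t, \sum_i w i * (2 - u i t) <= (1 + eps + del) * \sum_i w i.
Proof.
move=> w0 del0; have [t0] := probability_inhabited.
have [W0|/negbTE Wn0] := eqVneq (\sum_i w i) 0.
  exists t0; rewrite W0 mulr0 big1 // => i _.
  move/eqP: W0; rewrite psumr_eq0 // => /allP/(_ i (mem_index_enum _)) /eqP ->.
  by rewrite mul0r.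
have Wpos : 0 < \sum_i w i by rewrite lt_def Wn0 sumr_ge0.
have [t ht] : exists t, (1 - eps) * \sum_i w i - del * \sum_i w i <= \sum_i w i * u i t.
  apply: exists_ge_of_integral_ge; rewrite ?mulr_gt0 //.
  - by apply: measurable_sum => i; apply: measurable_funM.
  - by move=> t; apply: sumr_ge0 => i _; rewrite mulr_ge0 //; case/andP: (u01 i t).
  - by apply: integral_wsum_ge => // i t; case/andP: (u01 i t).
exists t; have -> : \sum_i w i * (2 - u i t) = 2 * \sum_i w i - \sum_i w i * u i t.
  by rewrite mulr_sumr -sumrB; apply: eq_bigr => i _; ring.
by lra.
Qed.

Lemma exists_samples_estimator (del : R) (K : nat) : 0 < del ->
  exists g : nat -> T,
    \sum_i \prod_(k < K) (2 - u i (g k)) <= (1 + eps + del) ^+ K * #|I|%:R.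
Proof.
move=> del0; elim: K => [|K [g hg]].
  have [t0] := probability_inhabited.
  exists (fun _ => t0); rewrite expr0 mul1r.
  by under eq_bigr do rewrite big_ord0; rewrite sumr_const.
have w0 i : 0 <= \prod_(k < K) (2 - u i (g k)).
  by apply: prodr_ge0 => k _; case/andP: (u01 i (g k)) => _; lra.
have [t ht] := exists_weighted_step w0 del0.
exists (fun k => if k == K then t else g k).
have -> : \sum_i \prod_(k < K.+1) (2 - u i (if k == K :> nat then t else g k)) =
          \sum_i \prod_(k < K) (2 - u i (g k)) * (2 - u i t).
  apply: eq_bigr => i _; rewrite big_ord_recr /= eqxx; congr (_ * _).
  by apply: eq_bigr => k _; rewrite ltn_eqF.
apply: le_trans ht _; rewrite exprS -mulrA ler_wpM2l //.
by rewrite !addr_ge0 // ltW.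
Qed.

Lemma exists_samples_average (a del : R) (K : nat) : 0 < del ->
  #|I|%:R * (1 + eps + del) ^+ K < expR (K%:R * a * ln 2) ->
  exists g : nat -> T, forall i, K%:R * (1 - a) <= \sum_(k < K) u i (g k).
Proof.
move=> del0 hslack; have [g hg] := exists_samples_estimator K del0.
have wge0 i k : 0 <= 2 - u i (g k) by case/andP: (u01 i (g k)) => _; lra.
exists g => i; rewrite leNgt; apply/negP => hlt.
have miss : K%:R * a <= \sum_(k < K) (1 - u i (g k)).
  by rewrite sumrB sumr_const card_ord; lra.
have : expR (K%:R * a * ln 2) <= \prod_(k < K) (2 - u i (g k)).
  have -> : \prod_(k < K) (2 - u i (g k)) = \prod_(k < K) (1 + (1 - u i (g k))).
    by apply: eq_bigr => k _; ring.
  apply: le_trans (expR_ln2_sum_le_prod _); last first.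
    by move=> k; case/andP: (u01 i (g k)) => ? ?; apply/andP; split; lra.
  by rewrite ler_expR ler_wpM2r // ln_ge0 // ler1n.
have est : \prod_(k < K) (2 - u i (g k)) <= \sum_i \prod_(k < K) (2 - u i (g k)).
  by rewrite (bigD1 i) //= lerDl sumr_ge0 // => j _; apply: prodr_ge0.
move=> /le_trans/(_ (le_trans est hg)); rewrite [_ * #|I|%:R]mulrC => h.
by have := lt_le_trans hslack h; rewrite ltxx.
Qed.

End Derandomization.

Unset Implicit Arguments.
Set Strict Implicit.
Set Printing Implicit Defensive.

Theorem lemma10 (R : realType) (S X : finType) (d : nat)
  (A : S -> X -> 'M[R[i]]_d) (hA : forall s, cq_channel (A s))
  (l M : nat) (hl : (0 < l)%N)
  (dT : measure_display) (T : measurableType dT) (P : probability T R)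
  (c : T -> dcode R X d l M) (hc : forall t, is_code (c t))
  (hcm : forall s : {ffun 'I_l -> S},
           measurable_fun setT (fun t => success A s (c t)))
  (eps : R) (heps0 : 0 <= eps) (heps1 : eps < 1)
  (hsucc : forall s : {ffun 'I_l -> S},
     ((1 - eps)%:E <= \int[P]_t (success A s (c t))%:E)%E)
  (n m : R) (K : nat) (hK : K%:R = l%:R `^ n)
  (h1 : 4 * eps <= l%:R `^ (- m))
  (h2 : 2 * log2 (#|S|%:R : R) < l%:R `^ (n - m - 1)) :
  exists C : 'I_K -> dcode R X d l M,
    (forall j, is_code (C j)) /\
    (forall s : {ffun 'I_l -> S},
       1 - l%:R `^ (- m) <= (K%:R)^-1 * \sum_(j < K) success A s (C j)).
Proof.
set a := l%:R `^ (- m) in h1 *.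
have lpos : 0 < (l%:R : R) by rewrite ltr0n.
have Kpos : (0 < K)%N by rewrite -(ltr0n R) hK powR_gt0.
have hS : 2 * l%:R * log2 (#|S|%:R : R) < K%:R * a.
  have l0 : (l%:R : R) != 0 by rewrite gt_eqF.
  have -> : K%:R * a = l%:R `^ (n - m - 1) * l%:R.
    by rewrite hK /a -powRD ?l0 ?implybT // -[X in _ = _ * X]powRr1 ?ler0n //
      -powRD ?l0 ?implybT // subrK.
  by rewrite mulrAC ltr_pM2r.
have [del del0 hslack] := exists_slack hl Kpos heps0 h1 hS.
have cardI : #|{ffun 'I_l -> S}| = (#|S| ^ l)%N by rewrite card_ffun card_ord.
rewrite -cardI in hslack.
have [g hg] := exists_samples_average heps0 hcm (fun s t => success_bounds hA s (hc t))
  hsucc del0 hslack.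
exists (fun k => c (g k)); split => // s.
by rewrite ler_pdivlMl ?ltr0n.
Qed.
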